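(* Let $\alpha$ be a Riemannian metric and $\beta$ a 1-form on a manifold, and let $k_1,k_2,k_3$ be constants with $1+(k_1+k_3)t+k_2t^2>0$ for $0\le t\le b^2$. Suppose $$b_{i|j}=2\tau\{(1+k_1b^2)a_{ij}+(k_2b^2+k_3)b_ib_j\}$$ for a scalar function $\tau$. Let $c=c(b^2)=\exp\big(\int_0^{b^2}\frac12\frac{k_3+k_2t}{1+(k_1+k_3)t+k_2t^2}dt\big)$ and $\tilde\beta=\beta/c$. Then the covariant derivative of $\tilde\beta$ with respect to $\alpha$ satisfies $$\tilde b_{i|j}=\frac{2\tau(1+k_1b^2)}{c}\,a_{ij};$$ in particular $\tilde\beta$ is closed and conformal with respect to $\alpha$.
   Context: For $\alpha=\sqrt{a_{ij}y^iy^j}$ and $\beta=b_iy^i$: $b=\|\beta\|_\alpha=\sqrt{a^{ij}b_ib_j}$, and $b_{i|j}$ denotes the covariant derivative of $\beta$ with respect to the Levi-Civita connection of $\alpha$. A 1-form is closed if its covariant derivative is symmetric. *)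

From Stdlib Require Import Reals Lra ClassicalEpsilon.
Open Scope R_scope.

(* Points of R^n are represented as functions nat -> R (only coordinates < n matter). *)
Definition pt := nat -> R.

Fixpoint sumn (n : nat) (f : nat -> R) : R :=
  match n with O => 0 | S m => sumn m f + f m end.

Definition kdelta (i j : nat) : R := if Nat.eqb i j then 1 else 0.

Definition shift (x : pt) (j : nat) (t : R) : pt :=
  fun k => if Nat.eqb k j then x k + t else x k.

Definition has_partial (f : pt -> R) (j : nat) (x : pt) (l : R) : Prop :=
  derivable_pt_lim (fun t => f (shift x j t)) 0 l.

(* the partial derivative d_j f (x) (meaningful when it exists; it is then unique) *)
Definition pd (f : pt -> R) (j : nat) (x : pt) : R :=
  epsilon (inhabits 0) (fun l => has_partial f j x l).

Definition open_in (n : nat) (U : pt -> Prop) : Prop :=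
  forall x, U x -> exists eps, 0 < eps /\
    forall y, (forall k, (k < n)%nat -> Rabs (y k - x k) < eps) -> U y.

(* Riemann integral  int_a^b f  (meaningful when f is Riemann integrable) *)
Definition Rint (f : R -> R) (a b : R) : R :=
  epsilon (inhabits 0) (fun I => exists pr : Riemann_integrable f a b, RiemannInt pr = I).

Definition riemannian_metric (n : nat) (U : pt -> Prop)
    (a ainv : nat -> nat -> pt -> R) : Prop :=
  forall x, U x ->
    (forall i j, (i < n)%nat -> (j < n)%nat -> a i j x = a j i x) /\
    (forall i j, (i < n)%nat -> (j < n)%nat ->
        sumn n (fun k => ainv i k x * a k j x) = kdelta i j) /\
    (forall v : nat -> R, (exists k, (k < n)%nat /\ v k <> 0) ->
        0 < sumn n (fun i => sumn n (fun j => a i j x * v i * v j))).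

Definition christoffel (n : nat) (a ainv : nat -> nat -> pt -> R)
    (k i j : nat) (x : pt) : R :=
  / 2 * sumn n (fun l => ainv k l x *
      (pd (a l j) i x + pd (a l i) j x - pd (a i j) l x)).

Definition covd (n : nat) (a ainv : nat -> nat -> pt -> R) (b : nat -> pt -> R)
    (i j : nat) (x : pt) : R :=
  pd (b i) j x - sumn n (fun k => christoffel n a ainv k i j x * b k x).

Definition bsq (n : nat) (ainv : nat -> nat -> pt -> R) (b : nat -> pt -> R) (x : pt) : R :=
  sumn n (fun i => sumn n (fun j => ainv i j x * b i x * b j x)).

Definition cfun (k1 k2 k3 s : R) : R :=
  exp (Rint (fun t => / 2 * ((k3 + k2 * t) / (1 + (k1 + k3) * t + k2 * t ^ 2))) 0 s).

From Stdlib Require Import Reals Lra Lia Classical ClassicalEpsilon FunctionalExtensionality.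
From Stdlib Require Import Morphisms Setoid.
From Coquelicot Require Import Coquelicot.
Open Scope R_scope.

(* Write s = b^2, D(s) = 1 + (k1+k3) s + k2 s^2 and c' = c * cdens with
   cdens(s) = (1/2)(k3 + k2 s)/D(s).  The proof has three ingredients.
   1. Metric compatibility: d_j (b^2) = 2 b^k b_{k|j}.  This is a pointwise identity
      between finite sums (the derivative of a^{ik} a_{kj} = delta^i_j eliminates
      d a^{ik}, and the Christoffel symbols reduce to a derivative of a_{pq}); it is
      proved first for abstract matrices and then instantiated at each point of the chart.
   2. Inserting the hypothesis on b_{i|j} gives d_j (b^2) = 4 tau D(b^2) b_j.
   3. c = exp (int_0^s cdens) satisfies c' = c * cdens by the fundamental theorem of
      calculus, D being positive near [0, b^2].  The quotient rule for covariant
      derivatives then gives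
        (b_i / c)_{|j} = b_{i|j}/c - b_i c' d_j(b^2) / c^2
                       = 2 tau [(1 + k1 s) a_ij + (k2 s + k3) b_i b_j - (k3 + k2 s) b_i b_j] / c,
      whose right-hand side is symmetric since a_ij is. *)

#[local] Instance sumn_proper (n : nat) :
  Proper (pointwise_relation nat eq ==> eq) (sumn n).
Proof. intros f g H. induction n; simpl; [reflexivity|]. rewrite IHn, H; reflexivity. Qed.

Lemma sumn_ext n f g : (forall k, (k < n)%nat -> f k = g k) -> sumn n f = sumn n g.
Proof.
  induction n as [|n IH]; simpl; intros H; [reflexivity|].
  rewrite IH by (intros; apply H; lia). rewrite H by lia. reflexivity.
Qed.

Lemma sumn_add n f g : sumn n (fun k => f k + g k) = sumn n f + sumn n g.
Proof. induction n; simpl; [ring|rewrite IHn; ring]. Qed.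

Lemma sumn_sub n f g : sumn n (fun k => f k - g k) = sumn n f - sumn n g.
Proof. induction n; simpl; [ring|rewrite IHn; ring]. Qed.

Lemma sumn_opp n f : sumn n (fun k => - f k) = - sumn n f.
Proof. induction n; simpl; [ring|rewrite IHn; ring]. Qed.

Lemma sumn_scal n c f : c * sumn n f = sumn n (fun k => c * f k).
Proof. induction n; simpl; [ring|rewrite <- IHn; ring]. Qed.

Lemma sumn_scalr n c f : sumn n f * c = sumn n (fun k => f k * c).
Proof. induction n; simpl; [ring|rewrite <- IHn; ring]. Qed.

Lemma sumn_zero n f : (forall k, (k < n)%nat -> f k = 0) -> sumn n f = 0.
Proof.
  intros H. rewrite (sumn_ext n f (fun _ => 0)) by exact H.
  clear H; induction n; simpl; [|rewrite IHn]; ring.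
Qed.

Lemma sumn_swap n m f :
  sumn n (fun i => sumn m (fun j => f i j)) = sumn m (fun j => sumn n (fun i => f i j)).
Proof.
  induction n as [|n IH]; simpl.
  - symmetry; apply sumn_zero; reflexivity.
  - rewrite IH, <- sumn_add; reflexivity.
Qed.

Lemma kdelta_sym i j : kdelta i j = kdelta j i.
Proof. unfold kdelta. destruct (Nat.eqb_spec i j), (Nat.eqb_spec j i); auto; lia. Qed.

Lemma sumn_delta n i f : (i < n)%nat -> sumn n (fun k => kdelta i k * f k) = f i.
Proof.
  induction n as [|n IH]; intros Hi; simpl; [lia|].
  destruct (Nat.eq_dec i n) as [->|Hne].
  - rewrite sumn_zero; [unfold kdelta; rewrite Nat.eqb_refl; ring|].
    intros k Hk. unfold kdelta. destruct (Nat.eqb_spec n k); [lia|ring].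
  - rewrite IH by lia. unfold kdelta. destruct (Nat.eqb_spec i n); [lia|ring].
Qed.

Section InverseMatrix.
Variables (n : nat) (A G : nat -> nat -> R).
Hypothesis A_sym : forall i j, (i < n)%nat -> (j < n)%nat -> A i j = A j i.
Hypothesis G_inv : forall i j, (i < n)%nat -> (j < n)%nat ->
  sumn n (fun k => G i k * A k j) = kdelta i j.

(* The inverse of a symmetric matrix is symmetric: G = G (A G') = (G A) G' = G'. *)
Lemma inv_sym i j : (i < n)%nat -> (j < n)%nat -> G i j = G j i.
Proof.
  intros Hi Hj.
  rewrite <- (sumn_delta n j (G i)) by exact Hj.
  transitivity (sumn n (fun m => sumn n (fun k => G j k * (A k m * G i m)))).
  { apply sumn_ext; intros m Hm. rewrite <- (G_inv j m Hj Hm), sumn_scalr.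
    apply sumn_ext; intros k Hk. ring. }
  rewrite sumn_swap. rewrite <- (sumn_delta n i (G j)) by exact Hi.
  apply sumn_ext; intros k Hk.
  rewrite <- sumn_scal, <- (G_inv i k Hi Hk), sumn_scal, sumn_scalr.
  apply sumn_ext; intros m Hm. rewrite (A_sym k m) by assumption. ring.
Qed.

Definition raise (B : nat -> R) (k : nat) : R := sumn n (fun l => G k l * B l).

Lemma raise_lower B j : (j < n)%nat -> sumn n (fun k => raise B k * A k j) = B j.
Proof.
  intros Hj. unfold raise. setoid_rewrite sumn_scalr. rewrite sumn_swap.
  rewrite <- (sumn_delta n j B) by exact Hj.
  apply sumn_ext; intros l Hl.
  rewrite kdelta_sym, <- (G_inv l j Hl Hj), sumn_scalr.
  apply sumn_ext; intros k Hk. rewrite (inv_sym k l) by assumption. ring.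
Qed.

Lemma raise_contract_l B p : (p < n)%nat -> sumn n (fun m => B m * G m p) = raise B p.
Proof. intros Hp. apply sumn_ext; intros m Hm. rewrite inv_sym by assumption. ring. Qed.

Lemma raise_contract c B Y :
  sumn n (fun m => c * sumn n (fun p => G m p * Y p) * B m) = c * sumn n (fun p => raise B p * Y p).
Proof.
  setoid_rewrite sumn_scal. setoid_rewrite sumn_scalr. rewrite sumn_swap.
  apply sumn_ext; intros p Hp. rewrite sumn_scal.
  apply sumn_ext; intros m Hm. rewrite (inv_sym p m) by assumption. ring.
Qed.

Lemma raise_norm B :
  sumn n (fun k => raise B k * B k) = sumn n (fun i => sumn n (fun j => G i j * B i * B j)).
Proof. unfold raise. setoid_rewrite sumn_scalr. apply sumn_ext; intros; apply sumn_ext; intros; ring. Qed.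

Lemma raise_contract_split c1 c2 C B j : (j < n)%nat ->
  (forall k, (k < n)%nat -> C k = c1 * A k j + c2 * B k * B j) ->
  sumn n (fun k => raise B k * C k) = (c1 + c2 * sumn n (fun k => raise B k * B k)) * B j.
Proof.
  intros Hj HC.
  rewrite (sumn_ext n _ (fun k => c1 * (raise B k * A k j) + c2 * B j * (raise B k * B k)))
    by (intros k Hk; rewrite HC by exact Hk; ring).
  rewrite sumn_add, <- !sumn_scal, raise_lower by exact Hj. ring.
Qed.

(* For a positive definite A the dual quadratic form is nonnegative: b^2 = a_{ij} b^i b^j. *)
Lemma norm_nonneg B
  (A_pos : forall v : nat -> R, (exists k, (k < n)%nat /\ v k <> 0) ->
             0 < sumn n (fun i => sumn n (fun j => A i j * v i * v j))) :
  0 <= sumn n (fun i => sumn n (fun j => G i j * B i * B j)).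
Proof.
  rewrite <- raise_norm.
  assert (Hq : sumn n (fun i => sumn n (fun j => A i j * raise B i * raise B j)) =
               sumn n (fun k => raise B k * B k)).
  { rewrite sumn_swap. apply sumn_ext; intros j Hj.
    rewrite <- (raise_lower B j Hj), sumn_scal.
    apply sumn_ext; intros i Hi. ring. }
  rewrite <- Hq.
  destruct (classic (exists k, (k < n)%nat /\ raise B k <> 0)) as [Hnz|Hz].
  - left; apply A_pos, Hnz.
  - right; symmetry. apply sumn_zero; intros i Hi. apply sumn_zero; intros j Hj.
    assert (Hu : raise B i = 0) by (apply NNPP; intro; apply Hz; eauto).
    rewrite Hu; ring.
Qed.

(* Pointwise data at a point of a chart: Da p q l, Dg i k l and Db i l play the roles of
   d_l a_{pq}, d_l a^{ik} and d_l b_i; the only relation between them that is needed is the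
   derivative of a^{ik} a_{kq} = delta^i_q. *)
Section MetricCompatibility.
Variables (Da Dg : nat -> nat -> nat -> R) (Db : nat -> nat -> R) (B : nat -> R).
Hypothesis G_inv_deriv : forall i q l, (i < n)%nat -> (q < n)%nat -> (l < n)%nat ->
  sumn n (fun k => Dg i k l * A k q + G i k * Da k q l) = 0.
Variables (j : nat).
Hypothesis Hj : (j < n)%nat.

Let u := raise B.

(* (d_j a^{ik}) b_i b_k = - b^k b^p d_j a_{kp}, since d(a^{ik}) a_{kq} = - a^{ik} d(a_{kq}). *)
Lemma inv_deriv_contract :
  sumn n (fun i => sumn n (fun k => Dg i k j * B i * B k)) =
  - sumn n (fun k => sumn n (fun p => u k * u p * Da k p j)).
Proof.
  transitivity (sumn n (fun i => sumn n (fun q => B i * u q * sumn n (fun k => Dg i k j * A k q)))).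
  { apply sumn_ext; intros i Hi.
    transitivity (sumn n (fun k => sumn n (fun q => Dg i k j * B i * (u q * A q k)))).
    { apply sumn_ext; intros k Hk. rewrite <- sumn_scal. unfold u. rewrite raise_lower; auto. }
    rewrite sumn_swap. apply sumn_ext; intros q Hq. rewrite sumn_scal.
    apply sumn_ext; intros k Hk. rewrite (A_sym q k) by auto. ring. }
  transitivity (- sumn n (fun i => sumn n (fun q => sumn n (fun k => B i * G i k * (u q * Da k q j))))).
  { rewrite <- sumn_opp. apply sumn_ext; intros i Hi. rewrite <- sumn_opp.
    apply sumn_ext; intros q Hq.
    assert (Hd := G_inv_deriv i q j Hi Hq Hj). rewrite sumn_add in Hd.
    replace (sumn n (fun k => Dg i k j * A k q)) with (- sumn n (fun k => G i k * Da k q j)) by lra.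
    rewrite <- !sumn_opp, sumn_scal. apply sumn_ext; intros; ring. }
  f_equal. rewrite sumn_swap.
  transitivity (sumn n (fun q => sumn n (fun k => u k * u q * Da k q j))).
  - apply sumn_ext; intros q Hq. rewrite sumn_swap. apply sumn_ext; intros k Hk.
    transitivity (sumn n (fun i => B i * G i k) * (u q * Da k q j)).
    + rewrite sumn_scalr. apply sumn_ext; intros; ring.
    + unfold u. rewrite raise_contract_l by auto. ring.
  - apply sumn_swap.
Qed.

(* b^k Gamma^m_{kj} b_m = (1/2) b^k b^p d_j a_{pk}: the two other terms of Gamma cancel. *)
Lemma christoffel_contract :
  sumn n (fun k => u k * sumn n (fun m =>
    / 2 * sumn n (fun p => G m p * (Da p j k + Da p k j - Da k j p)) * B m)) =
  / 2 * sumn n (fun k => sumn n (fun p => u k * u p * Da p k j)).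
Proof.
  transitivity (/ 2 * sumn n (fun k => sumn n (fun p => u k * u p * (Da p j k + Da p k j - Da k j p)))).
  { rewrite sumn_scal. apply sumn_ext; intros k Hk.
    unfold u; rewrite raise_contract; fold u.
    rewrite !sumn_scal. apply sumn_ext; intros; ring. }
  f_equal.
  assert (Hsw : sumn n (fun k => sumn n (fun p => u k * u p * Da p j k)) =
                sumn n (fun k => sumn n (fun p => u k * u p * Da k j p))).
  { rewrite sumn_swap. apply sumn_ext; intros; apply sumn_ext; intros; ring. }
  transitivity (sumn n (fun k => sumn n (fun p => u k * u p * Da p k j)) +
    (sumn n (fun k => sumn n (fun p => u k * u p * Da p j k)) -
     sumn n (fun k => sumn n (fun p => u k * u p * Da k j p)))).
  - rewrite <- sumn_sub, <- sumn_add. apply sumn_ext; intros k Hk.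
    rewrite <- sumn_sub, <- sumn_add. apply sumn_ext; intros; ring.
  - rewrite Hsw. ring.
Qed.

Lemma deriv_norm_contract :
  sumn n (fun i => sumn n (fun k =>
    (Dg i k j * B i + G i k * Db i j) * B k + G i k * B i * Db k j)) =
  2 * sumn n (fun k => raise B k * (Db k j - sumn n (fun m =>
    / 2 * sumn n (fun p => G m p * (Da p j k + Da p k j - Da k j p)) * B m))).
Proof.
  fold u. set (W := sumn n (fun k => u k * Db k j)).
  assert (Hfirst : sumn n (fun i => sumn n (fun k => G i k * Db i j * B k)) = W).
  { apply sumn_ext; intros i Hi. unfold u, raise. rewrite sumn_scalr.
    apply sumn_ext; intros; ring. }
  assert (Hsecond : sumn n (fun i => sumn n (fun k => G i k * B i * Db k j)) = W).
  { rewrite sumn_swap. apply sumn_ext; intros k Hk.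
    unfold u. rewrite <- raise_contract_l by exact Hk.
    rewrite sumn_scalr. apply sumn_ext; intros; ring. }
  assert (Hsym : sumn n (fun k => sumn n (fun p => u k * u p * Da k p j)) =
                 sumn n (fun k => sumn n (fun p => u k * u p * Da p k j))).
  { rewrite sumn_swap. apply sumn_ext; intros; apply sumn_ext; intros; ring. }
  transitivity (sumn n (fun i => sumn n (fun k => Dg i k j * B i * B k)) +
    sumn n (fun i => sumn n (fun k => G i k * Db i j * B k)) +
    sumn n (fun i => sumn n (fun k => G i k * B i * Db k j))).
  { rewrite <- !sumn_add. apply sumn_ext; intros i Hi.
    rewrite <- !sumn_add. apply sumn_ext; intros; ring. }
  transitivity (2 * (W - sumn n (fun k => u k * sumn n (fun m =>
    / 2 * sumn n (fun p => G m p * (Da p j k + Da p k j - Da k j p)) * B m)))).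
  - rewrite inv_deriv_contract, Hfirst, Hsecond, christoffel_contract, Hsym. field.
  - f_equal. unfold W. rewrite <- sumn_sub. apply sumn_ext; intros; ring.
Qed.

End MetricCompatibility.

End InverseMatrix.

Lemma shift0 x j : shift x j 0 = x.
Proof. apply functional_extensionality; intros k; unfold shift. destruct (k =? j)%nat; ring. Qed.

(* Partial derivatives are unique, so [pd] returns any partial derivative that exists. *)
Lemma pd_eq f j x l : has_partial f j x l -> pd f j x = l.
Proof.
  intros H. unfold pd.
  pose proof (epsilon_spec (inhabits 0) (fun l => has_partial f j x l) (ex_intro _ l H)) as Hpd.
  exact (uniqueness_limite _ _ _ _ Hpd H).
Qed.

Lemma has_partial_pd f j x : (exists d, has_partial f j x d) -> has_partial f j x (pd f j x).
Proof. intros [d H]. rewrite (pd_eq f j x d H). exact H. Qed.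

Lemma has_partial_mult f g j x df dg :
  has_partial f j x df -> has_partial g j x dg ->
  has_partial (fun y => f y * g y) j x (df * g x + f x * dg).
Proof.
  intros Hf Hg. pose proof (derivable_pt_lim_mult _ _ 0 df dg Hf Hg) as H.
  cbv beta in H. rewrite shift0 in H. exact H.
Qed.

Lemma has_partial_div f g j x df dg :
  has_partial f j x df -> has_partial g j x dg -> g x <> 0 ->
  has_partial (fun y => f y / g y) j x ((df * g x - dg * f x) / (g x)²).
Proof.
  intros Hf Hg Hnz. rewrite <- (shift0 x j) in Hnz.
  pose proof (derivable_pt_lim_div _ _ 0 df dg Hf Hg Hnz) as H.
  cbv beta in H. rewrite shift0 in H. exact H.
Qed.

Lemma has_partial_comp (h : R -> R) f j x dh df :
  has_partial f j x df -> derivable_pt_lim h (f x) dh ->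
  has_partial (fun y => h (f y)) j x (dh * df).
Proof.
  intros Hf Hh. rewrite <- (shift0 x j) in Hh.
  exact (derivable_pt_lim_comp _ h 0 df dh Hf Hh).
Qed.

Lemma has_partial_sumn m (F : nat -> pt -> R) (D : nat -> R) j x :
  (forall k, (k < m)%nat -> has_partial (F k) j x (D k)) ->
  has_partial (fun y => sumn m (fun k => F k y)) j x (sumn m D).
Proof.
  induction m as [|m IH]; intros H; simpl.
  - apply derivable_pt_lim_const.
  - apply (derivable_pt_lim_plus (fun t => sumn m (fun k => F k (shift x j t)))
                                 (fun t => F m (shift x j t))).
    + apply IH; intros; apply H; lia.
    + apply H; lia.
Qed.

Lemma has_partial_const_on n U f c j x d :
  open_in n U -> U x -> (forall y, U y -> f y = c) -> has_partial f j x d -> d = 0.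
Proof.
  intros HU Hx Hc Hd. destruct (HU x Hx) as [eps [Heps Hball]].
  apply is_derive_Reals in Hd. rewrite <- (is_derive_unique _ _ _ Hd).
  apply is_derive_unique, (is_derive_ext_loc (fun _ => c)); [|apply is_derive_Reals, derivable_pt_lim_const].
  exists (mkposreal eps Heps). intros t Ht. symmetry. apply Hc, Hball.
  intros k Hk. unfold shift. destruct (k =? j)%nat.
  - replace (x k + t - x k) with (t - 0) by ring. exact Ht.
  - replace (x k - x k) with 0 by ring. rewrite Rabs_R0. exact Heps.
Qed.

Lemma covd_div n a ainv (b : nat -> pt -> R) (f : pt -> R) i j x df :
  has_partial (b i) j x (pd (b i) j x) -> has_partial f j x df -> f x <> 0 ->
  covd n a ainv (fun i y => b i y / f y) i j x =
  covd n a ainv b i j x / f x - b i x * df / (f x)².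
Proof.
  intros Hb Hf Hnz. unfold covd.
  rewrite (pd_eq _ _ _ _ (has_partial_div _ _ j x _ _ Hb Hf Hnz)).
  rewrite (sumn_ext n _ (fun k => / f x * (christoffel n a ainv k i j x * b k x)))
    by (intros; field; exact Hnz).
  rewrite <- sumn_scal. unfold Rsqr. field. exact Hnz.
Qed.

(* The integrand of log c:  c'(s) / c(s) = (1/2) (k3 + k2 s) / (1 + (k1+k3) s + k2 s^2). *)
Definition cdens (k1 k2 k3 t : R) : R :=
  / 2 * ((k3 + k2 * t) / (1 + (k1 + k3) * t + k2 * t ^ 2)).

Lemma Rint_RInt f lo hi : ex_RInt f lo hi -> Rint f lo hi = RInt f lo hi.
Proof.
  intros Hex. pose proof (ex_RInt_Reals_0 _ _ _ Hex) as pr.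
  rewrite (RInt_Reals _ _ _ pr). unfold Rint.
  destruct (epsilon_spec (inhabits 0)
    (fun I => exists pr : Riemann_integrable f lo hi, RiemannInt pr = I)) as [pr' H].
  - exists (RiemannInt pr); eauto.
  - rewrite <- H. apply RiemannInt_P5.
Qed.

Lemma pos_on_open_interval (f : R -> R) s :
  (forall t, continuity_pt f t) -> (forall t, 0 <= t <= s -> 0 < f t) -> 0 <= s ->
  exists lo hi, lo < 0 /\ s < hi /\ forall t, lo < t < hi -> 0 < f t.
Proof.
  intros Hc Hpos Hs.
  assert (Hnear : forall x0, 0 <= x0 <= s ->
            exists e, 0 < e /\ forall t, Rabs (t - x0) < e -> 0 < f t).
  { intros x0 Hx0. destruct (Hc x0 (f x0) (Hpos x0 Hx0)) as [e [He Hball]].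
    exists e; split; [exact He|]. intros t Ht.
    destruct (Req_dec t x0) as [->|Hne]; [exact (Hpos x0 Hx0)|].
    specialize (Hball t (conj (conj I (not_eq_sym Hne)) Ht)).
    simpl in Hball; unfold R_dist in Hball. apply Rabs_def2 in Hball. lra. }
  destruct (Hnear 0) as [e0 [He0 H0]]; [lra|].
  destruct (Hnear s) as [e1 [He1 H1]]; [lra|].
  exists (- e0), (s + e1). repeat split; try lra. intros t Ht.
  destruct (Rlt_le_dec t 0); [apply H0; rewrite Rminus_0_r, Rabs_left; lra|].
  destruct (Rle_lt_dec t s); [apply Hpos; lra|].
  apply H1. rewrite Rabs_right; lra.
Qed.

Lemma cfun_deriv k1 k2 k3 s : 0 <= s ->
  (forall t, 0 <= t <= s -> 0 < 1 + (k1 + k3) * t + k2 * t ^ 2) ->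
  derivable_pt_lim (cfun k1 k2 k3) s (cfun k1 k2 k3 s * cdens k1 k2 k3 s).
Proof.
  intros Hs Hpos.
  destruct (pos_on_open_interval (fun t => 1 + (k1 + k3) * t + k2 * t ^ 2) s)
    as [lo [hi [Hlo [Hhi Hq]]]]; [intros; reg|exact Hpos|exact Hs|].
  assert (Hcont : forall t, lo < t < hi -> continuous (cdens k1 k2 k3) t).
  { intros t Ht. apply continuity_pt_filterlim. unfold cdens.
    specialize (Hq t Ht). reg. lra. }
  assert (Hint : forall s', lo < s' < hi -> ex_RInt (cdens k1 k2 k3) 0 s').
  { intros s' Hs'. apply (@ex_RInt_continuous R_CompleteNormedModule).
    intros z Hz. apply Hcont. unfold Rmin, Rmax in Hz. destruct (Rle_dec 0 s'); lra. }
  assert (Hc : forall s', lo < s' < hi ->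
                 cfun k1 k2 k3 s' = exp (RInt (cdens k1 k2 k3) 0 s')).
  { intros s' Hs'. unfold cfun. f_equal. apply Rint_RInt, Hint, Hs'. }
  apply is_derive_Reals.
  apply (is_derive_ext_loc (fun s' => exp (RInt (cdens k1 k2 k3) 0 s'))).
  { apply (locally_interval _ s lo hi); simpl; try lra. intros y Hy1 Hy2. symmetry; apply Hc; lra. }
  rewrite Hc by lra. apply is_derive_Reals.
  apply (derivable_pt_lim_comp (fun s' => RInt (cdens k1 k2 k3) 0 s') exp).
  - apply is_derive_Reals, (is_derive_RInt _ _ 0).
    + apply (locally_interval _ s lo hi); simpl; try lra. intros y Hy1 Hy2.
      apply (@RInt_correct R_CompleteNormedModule), Hint; lra.
    + apply Hcont; lra.
  - apply derivable_pt_lim_exp.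
Qed.

Section Chart.
Variables (n : nat) (U : pt -> Prop) (a ainv : nat -> nat -> pt -> R) (b : nat -> pt -> R).
Hypothesis HU : open_in n U.
Hypothesis Ha : riemannian_metric n U a ainv.
Hypothesis Hda : forall i j l x, (i < n)%nat -> (j < n)%nat -> (l < n)%nat -> U x ->
  exists d, has_partial (a i j) l x d.
Hypothesis Hdainv : forall i j l x, (i < n)%nat -> (j < n)%nat -> (l < n)%nat -> U x ->
  exists d, has_partial (ainv i j) l x d.
Hypothesis Hdb : forall i l x, (i < n)%nat -> (l < n)%nat -> U x ->
  exists d, has_partial (b i) l x d.

Lemma bsq_nonneg x : U x -> 0 <= bsq n ainv b x.
Proof.
  intros Hx. destruct (Ha x Hx) as [Asym [Ginv Apos]].
  exact (norm_nonneg n (fun i j => a i j x) (fun i j => ainv i j x) Asym Ginv (fun i => b i x) Apos).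
Qed.

(* Differentiating a^{ik} a_{kq} = delta^i_q: (d_l a^{ik}) a_{kq} + a^{ik} d_l a_{kq} = 0. *)
Lemma inverse_metric_deriv x i q l : U x -> (i < n)%nat -> (q < n)%nat -> (l < n)%nat ->
  sumn n (fun k => pd (ainv i k) l x * a k q x + ainv i k x * pd (a k q) l x) = 0.
Proof.
  intros Hx Hi Hq Hl.
  apply (has_partial_const_on n U (fun y => sumn n (fun k => ainv i k y * a k q y))
           (kdelta i q) l x); auto.
  - intros y Hy. destruct (Ha y Hy) as [_ [Ginv _]]. apply Ginv; assumption.
  - apply has_partial_sumn; intros k Hk. apply has_partial_mult; apply has_partial_pd; auto.
Qed.

(* Gradient of the squared norm: d_j (b^2) = 2 b^k b_{k|j}, since alpha is parallel. *)
Lemma has_partial_bsq x j : U x -> (j < n)%nat ->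
  has_partial (bsq n ainv b) j x
    (2 * sumn n (fun k => raise n (fun p q => ainv p q x) (fun i => b i x) k * covd n a ainv b k j x)).
Proof.
  intros Hx Hj. destruct (Ha x Hx) as [Asym [Ginv _]].
  assert (Hprod : has_partial (bsq n ainv b) j x (sumn n (fun i => sumn n (fun k =>
     (pd (ainv i k) j x * b i x + ainv i k x * pd (b i) j x) * b k x
     + ainv i k x * b i x * pd (b k) j x)))).
  { apply has_partial_sumn; intros i Hi. apply has_partial_sumn; intros k Hk.
    repeat apply has_partial_mult; apply has_partial_pd; auto. }
  rewrite (deriv_norm_contract n (fun p q => a p q x) (fun p q => ainv p q x) Asym Ginv
    (fun p q l => pd (a p q) l x) (fun p q l => pd (ainv p q) l x) (fun i l => pd (b i) l x)
    (fun i => b i x) (fun i q l Hi Hq Hl => inverse_metric_deriv x i q l Hx Hi Hq Hl) j Hj) in Hprod.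
  exact Hprod.
Qed.

Lemma has_partial_bsq_concircular x j p q : U x -> (j < n)%nat ->
  (forall k, (k < n)%nat -> covd n a ainv b k j x = p * a k j x + q * b k x * b j x) ->
  has_partial (bsq n ainv b) j x (2 * (p + q * bsq n ainv b x) * b j x).
Proof.
  intros Hx Hj Hcovd. destruct (Ha x Hx) as [Asym [Ginv _]].
  pose proof (has_partial_bsq x j Hx Hj) as H.
  rewrite (raise_contract_split n _ _ Asym Ginv p q _ (fun i => b i x) j Hj Hcovd),
    raise_norm in H.
  replace (2 * (p + q * bsq n ainv b x) * b j x)
    with (2 * ((p + q * bsq n ainv b x) * b j x)) by ring.
  exact H.
Qed.

End Chart.

Theorem mainTheorem16
  (n : nat) (U : pt -> Prop) (a ainv : nat -> nat -> pt -> R)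
  (b : nat -> pt -> R) (tau : pt -> R) (k1 k2 k3 : R)
  (HU : open_in n U)
  (Ha : riemannian_metric n U a ainv)
  (Hda : forall i j l x, (i < n)%nat -> (j < n)%nat -> (l < n)%nat -> U x ->
           exists d, has_partial (a i j) l x d)
  (Hdainv : forall i j l x, (i < n)%nat -> (j < n)%nat -> (l < n)%nat -> U x ->
           exists d, has_partial (ainv i j) l x d)
  (Hdb : forall i l x, (i < n)%nat -> (l < n)%nat -> U x ->
           exists d, has_partial (b i) l x d)
  (Hpos : forall x t, U x -> 0 <= t <= bsq n ainv b x ->
           0 < 1 + (k1 + k3) * t + k2 * t ^ 2)
  (Hb : forall x i j, U x -> (i < n)%nat -> (j < n)%nat ->
           covd n a ainv b i j x =
           2 * tau x * ((1 + k1 * bsq n ainv b x) * a i j x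
                        + (k2 * bsq n ainv b x + k3) * b i x * b j x)) :
  let btil := fun i y => b i y / cfun k1 k2 k3 (bsq n ainv b y) in
  forall x, U x ->
    (forall i j, (i < n)%nat -> (j < n)%nat ->
       covd n a ainv btil i j x =
       2 * tau x * (1 + k1 * bsq n ainv b x) / cfun k1 k2 k3 (bsq n ainv b x) * a i j x) /\
    (forall i j, (i < n)%nat -> (j < n)%nat ->
       covd n a ainv btil i j x = covd n a ainv btil j i x).
Proof.
  intros btil x Hx. unfold btil.
  destruct (Ha x Hx) as [Asym _].
  set (s := bsq n ainv b x). set (c := cfun k1 k2 k3 s).
  set (D := 1 + (k1 + k3) * s + k2 * s ^ 2).
  assert (Hs : 0 <= s) by exact (bsq_nonneg n U a ainv b Ha x Hx).
  assert (HD : 0 < D) by (apply (Hpos x s Hx); fold s; lra).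
  assert (Hc : 0 < c) by apply exp_pos.
  assert (Hgrad : forall j, (j < n)%nat -> has_partial (bsq n ainv b) j x (4 * tau x * D * b j x)).
  { intros j Hj.
    replace (4 * tau x * D * b j x) with
      (2 * (2 * tau x * (1 + k1 * s) + 2 * tau x * (k2 * s + k3) * s) * b j x) by (unfold D; ring).
    apply (has_partial_bsq_concircular n U a ainv b HU Ha Hda Hdainv Hdb x j); auto.
    intros k Hk. rewrite Hb by auto. fold s. ring. }
  (* Quotient rule with d_j c(b^2) = c'(b^2) d_j b^2: the b_i b_j terms cancel. *)
  assert (Hcovd : forall i j, (i < n)%nat -> (j < n)%nat ->
    covd n a ainv (fun i y => b i y / cfun k1 k2 k3 (bsq n ainv b y)) i j x =
    2 * tau x * (1 + k1 * s) / c * a i j x).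
  { intros i j Hi Hj.
    rewrite (covd_div n a ainv b (fun y => cfun k1 k2 k3 (bsq n ainv b y)) i j x
               (c * cdens k1 k2 k3 s * (4 * tau x * D * b j x))).
    - rewrite Hb by auto. fold s c. unfold cdens, Rsqr. fold D. field. lra.
    - apply has_partial_pd, Hdb; auto.
    - apply has_partial_comp; [apply Hgrad, Hj|].
      apply cfun_deriv; [exact Hs|]. intros t Ht. apply (Hpos x t Hx Ht).
    - fold s c. lra. }
  split; [exact Hcovd|].
  intros i j Hi Hj. rewrite !Hcovd, Asym by auto. reflexivity.
Qed.
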